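(* The numbers $P_{1^{-1}6^{1}10^{1}15^{-1}}(n)$, defined by $\sum_{n\ge0}P_{1^{-1}6^{1}10^{1}15^{-1}}(n)q^n=\frac{f_6f_{10}}{f_1f_{15}}$, form a $2$-convolutive sequence.
   Context: $f_i:=(q^i;q^i)_\infty=\prod_{k\ge1}(1-q^{ik})$. A sequence $(a_n)_{n\ge0}$ is $m$-convolutive if $\sum_{n\ge0}a_{mn}q^n=\big(\sum_{n\ge0}a_nq^n\big)^m$. *)

From mathcomp Require Import all_boot all_order all_algebra.
Set Implicit Arguments. Unset Strict Implicit. Unset Printing Implicit Defensive.
Import GRing.Theory.
Local Open Scope ring_scope.

Definition ps := nat -> int.

Definition ps_mul (a b : ps) : ps :=
  fun n => \sum_(i < n.+1) a i * b (n - i)%N.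

Definition ps_one : ps := fun n => if n == 0%N then 1 else 0.

Definition ps_pow (a : ps) (m : nat) : ps := iter m (ps_mul a) ps_one.

Definition convolutive (m : nat) (a : ps) : Prop :=
  forall n, a (m * n)%N = ps_pow a m n.

(* Truncation at N of f_i = prod_(k>=1) (1 - q^(i k)): the factors k = 1..N.
   For i >= 1 this has the same coefficients as f_i in degrees <= N. *)
Definition eta_trunc (i N : nat) : {poly int} :=
  \prod_(k < N) (1 - 'X^(i * k.+1)).

(* Truncation of 1/f_i = prod_(k>=1) sum_(j>=0) q^(i k j): factors k = 1..N,
   geometric series truncated at j = N. For i >= 1 it agrees with 1/f_i in
   degrees <= N. *)
Definition etainv_trunc (i N : nat) : {poly int} :=
  \prod_(k < N) \sum_(j < N.+1) 'X^(i * k.+1 * j).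

Definition P_6_10_1_15 : ps := fun n =>
  (eta_trunc 6 n * eta_trunc 10 n * etainv_trunc 1 n * etainv_trunc 15 n)`_n.

(* Let F = f6 f10 / (f1 f15), G = f3 f5 / (f1^2 f15^2) and
   psi(q) = sum_(m >= 0) q^(m(m+1)/2), which equals f2^2 / f1 by Gauss.  Then
   F(q) = G(q^2) psi(q) psi(q^15) and F(q)^2 = G(q) psi(q^3) psi(q^5), so the claim
   sum_n P(2n) q^n = F(q)^2 reduces to: the even part of psi(q) psi(q^15) is
   psi(q^3) psi(q^5).  Since 2 psi(q) = sum_(x odd) q^((x^2 - 1)/8), this says that
   x^2 + 15 y^2 = 16 s and 3 u^2 + 5 v^2 = 8 s have equally many odd solutions, and
   (u, v) |-> ((3u +- 5v)/2, (u -+ v)/2) is a bijection between them.  Gauss's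
   identity follows from the finite Jacobi triple product, a case of Rothe's
   q-binomial theorem.  Infinite products are replaced by truncations compared
   coefficientwise up to a fixed degree. *)

From mathcomp Require Import all_boot all_order all_algebra.
From mathcomp Require Import zify ring.
Set Implicit Arguments. Unset Strict Implicit. Unset Printing Implicit Defensive.
Import GRing.Theory Num.Theory.
Local Open Scope ring_scope.

Section EqUpto.
Variable R : nzRingType.
Implicit Types p q r : {poly R}.

Definition eq_upto (N : nat) p q := forall i, (i <= N)%N -> p`_i = q`_i.

Lemma eq_upto_sym N p q : eq_upto N p q -> eq_upto N q p.
Proof. by move=> pq i iN; rewrite pq. Qed.

Lemma eq_upto_trans N p q r : eq_upto N p q -> eq_upto N q r -> eq_upto N p r.
Proof. by move=> pq qr i iN; rewrite pq ?qr. Qed.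

Lemma eq_uptoD N p q p' q' :
  eq_upto N p q -> eq_upto N p' q' -> eq_upto N (p + p') (q + q').
Proof. by move=> pq pq' i iN; rewrite !coefD pq ?pq'. Qed.

Lemma eq_uptoM N p q p' q' :
  eq_upto N p q -> eq_upto N p' q' -> eq_upto N (p * p') (q * q').
Proof.
move=> pq pq' i iN; rewrite !coefM; apply: eq_bigr => j _.
have ji : (j <= i)%N by rewrite -ltnS.
by rewrite pq ?pq' ?(leq_trans ji) // (leq_trans (leq_subr _ _)).
Qed.

Lemma eq_uptoMl N r p q : eq_upto N p q -> eq_upto N (r * p) (r * q).
Proof. exact: eq_uptoM. Qed.

Lemma eq_uptoMr N r p q : eq_upto N p q -> eq_upto N (p * r) (q * r).
Proof. by move/eq_uptoM; apply. Qed.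

Lemma eq_upto_mulr1 N p u : eq_upto N u 1 -> eq_upto N (p * u) p.
Proof. by rewrite -{2}[p]mulr1; apply: eq_uptoMl. Qed.

Lemma eq_upto_mul1 N p q :
  eq_upto N p 1 -> eq_upto N q 1 -> eq_upto N (p * q) 1.
Proof. by rewrite -{3}(mulr1 1); apply: eq_uptoM. Qed.

Lemma eq_upto_sum N (I : Type) (s : seq I) (P : pred I) (F G : I -> {poly R}) :
  (forall i, P i -> eq_upto N (F i) (G i)) ->
  eq_upto N (\sum_(i <- s | P i) F i) (\sum_(i <- s | P i) G i).
Proof. by move=> FG; apply: big_ind2 => //; apply: eq_uptoD. Qed.

Lemma eq_upto_XnM N e p q : (N < e)%N -> eq_upto N ('X^e * p) ('X^e * q).
Proof. by move=> Ne i iN; rewrite !coefXnM ifT // (leq_ltn_trans iN). Qed.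

Lemma eq_upto_1DXn N e p : (N < e)%N -> eq_upto N (1 + 'X^e * p) 1.
Proof.
by move=> Ne; rewrite -[X in eq_upto _ _ X]addr0 -(mulr0 'X^e); apply/eq_uptoD/eq_upto_XnM.
Qed.

Lemma eq_upto_prod1 N (I : Type) (s : seq I) (P : pred I) (F : I -> {poly R}) :
  (forall i, P i -> eq_upto N (F i) 1) -> eq_upto N (\prod_(i <- s | P i) F i) 1.
Proof. by move=> F1; apply: (big_ind (eq_upto N ^~ 1)) => //; apply: eq_upto_mul1. Qed.

Lemma eq_upto_prod_stable N (F : nat -> {poly R}) a b :
  (forall i, (N <= i)%N -> eq_upto N (F i) 1) -> (N <= a)%N -> (N <= b)%N ->
  eq_upto N (\prod_(i < a) F i) (\prod_(i < b) F i).
Proof.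
move=> F1 Na Nb.
suff head c : (N <= c)%N -> eq_upto N (\prod_(i < c) F i) (\prod_(i < N) F i).
  exact: eq_upto_trans (head _ Na) (eq_upto_sym (head _ Nb)).
move=> Nc; rewrite -!(big_mkord xpredT) (big_cat_nat (n := N)) //=.
rewrite [\prod_(N <= i < c) _]big_nat_cond.
by apply/eq_upto_mulr1/eq_upto_prod1 => i /andP[/andP[/F1]].
Qed.

End EqUpto.

Lemma eq_upto_inv (R : comNzRingType) N (p p' q q' : {poly R}) :
  eq_upto N (p * p') 1 -> eq_upto N (q * q') 1 -> eq_upto N p q -> eq_upto N p' q'.
Proof.
move=> pp' qq' pq; apply: eq_upto_trans (eq_upto_sym (eq_upto_mulr1 p' qq')) _.
apply: (eq_upto_trans (q := p' * (p * q'))).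
  by apply/eq_uptoMl/eq_uptoMr/eq_upto_sym.
by rewrite mulrA (mulrC p') -[X in eq_upto _ _ X]mul1r; apply: eq_uptoMr.
Qed.

Section QBinomial.
Variable R : comPzRingType.
Implicit Types q z w : R.

Fixpoint qbinom q m k : R :=
  match m, k with
  | _, 0 => 1
  | 0, _.+1 => 0
  | m'.+1, k'.+1 => qbinom q m' k' + q ^+ k'.+1 * qbinom q m' k'.+1
  end.

Lemma qbinom0 q m : qbinom q m 0 = 1.
Proof. by case: m. Qed.

Lemma qbinomSS q m k :
  qbinom q m.+1 k.+1 = qbinom q m k + q ^+ k.+1 * qbinom q m k.+1.
Proof. by []. Qed.

Lemma qbinom_small q m k : (m < k)%N -> qbinom q m k = 0.
Proof.
elim: m k => [|m IHm] [|k] //= ltmk.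
by rewrite !IHm ?mulr0 ?addr0 // ltnW.
Qed.

Lemma qbinomii q m : qbinom q m m = 1.
Proof. by elim: m => //= m ->; rewrite qbinom_small ?mulr0 ?addr0. Qed.

Lemma qbinom_theorem q m z w :
  \prod_(i < m) (w + z * q ^+ i) =
  \sum_(k < m.+1) q ^+ 'C(k, 2) * qbinom q m k * z ^+ k * w ^+ (m - k).
Proof.
elim: m z => [|m IHm] z; first by rewrite big_ord0 big_ord1 /= !mulr1.
rewrite big_ord_recl mulr1.
under eq_bigr => i _ do rewrite lift0 exprS mulrA.
rewrite IHm mulrDl [RHS]big_ord_recl.
under [X in _ = _ + X]eq_bigr => i _ do
  rewrite lift0 qbinomSS subSS mulrDr !mulrDl binS bin1 exprD.
rewrite big_split /= addrA [RHS]addrAC; congr (_ + _); last first.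
  by rewrite mulr_sumr; apply: eq_bigr => i _; rewrite exprMn exprS; ring.
rewrite [in LHS]big_ord_recl [in RHS]big_ord_recr /= (qbinom_small _ (ltnSn m)).
rewrite qbinom0 !(mulr0, mul0r, addr0, mulr1, expr0, mul1r) !subn0 mulrDr -exprS.
congr (_ + _); rewrite mulr_sumr; apply: eq_bigr => i _.
rewrite /bump leq0n add1n exprMn -(subnSK (ltn_ord i)) binS bin1 !exprS exprD; ring.
Qed.

Definition qpoch q n := \prod_(i < n) (1 - q ^+ i.+1).

Lemma qpochS q n : qpoch q n.+1 = qpoch q n * (1 - q ^+ n.+1).
Proof. exact: big_ord_recr. Qed.

Lemma qpoch_qbinom q a b :
  qpoch q a * qpoch q b * qbinom q (a + b) a = qpoch q (a + b).
Proof.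
elim: a b => [|a IHa] b; first by rewrite qbinom0 /qpoch big_ord0 mul1r mulr1.
elim: b => [|b IHb]; first by rewrite addn0 qbinomii /qpoch big_ord0 !mulr1.
have -> : qpoch q a.+1 * qpoch q b.+1 * qbinom q (a.+1 + b.+1) a.+1 =
    (1 - q ^+ a.+1) * (qpoch q a * qpoch q b.+1 * qbinom q (a + b.+1) a) +
    q ^+ a.+1 * (1 - q ^+ b.+1) * (qpoch q a.+1 * qpoch q b * qbinom q (a.+1 + b) a.+1).
  by rewrite addSn qbinomSS -addSnnS (qpochS q a) (qpochS q b); ring.
rewrite IHa IHb (addnS a.+1 b) -addSnnS qpochS -addnS exprD; ring.
Qed.

Lemma qpoch_sqr q n :
  qpoch q n * \prod_(i < n) (1 + q ^+ i.+1) = qpoch (q ^+ 2) n.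
Proof.
rewrite /qpoch -big_split /=; apply: eq_bigr => i _.
by rewrite -exprM mulnC exprM; ring.
Qed.

End QBinomial.

(* The triangular number T(j - n) = (j - n)(j - n + 1)/2, where j - n may be negative. *)
Definition tri n j := if (n <= j)%N then 'C((j - n).+1, 2) else 'C(n - j, 2).

Definition oddz n j : int := (j%:Z - n%:Z) * 2 + 1.

Lemma bin2_sqr x : ('C(x, 2) * 2 + x = x * x)%N.
Proof. by elim: x => // x IHx; rewrite binS bin1; nia. Qed.

Lemma tri_oddz n j : 8 * (tri n j)%:Z + 1 = oddz n j ^+ 2.
Proof.
rewrite /tri /oddz; case: leqP => [nj|jn].
  by have := bin2_sqr (j - n).+1; rewrite expr2; nia.
by have := bin2_sqr (n - j); rewrite expr2; nia.
Qed.

Lemma tri_exponent n j : (j <= n.*2)%N ->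
  ('C(j, 2) + j + n * (n.*2 - j) = 'C(n.+1, 2) + n * n + tri n j)%N.
Proof.
move=> jn; have := tri_oddz n j; rewrite /oddz expr2.
have := bin2_sqr j; have := bin2_sqr n.+1; nia.
Qed.

Lemma finite_jacobi (R : idomainType) (q : R) n : q != 0 ->
  \prod_(i < n) (1 + q ^+ i.+1) * \prod_(i < n) (1 + q ^+ i) =
  \sum_(j < n.*2.+1) q ^+ tri n j * qbinom q n.*2 j.
Proof.
move=> q_neq0; apply: (mulfI (expf_neq0 ('C(n.+1, 2) + n * n) q_neq0)).
have triX : \prod_(i < n) q ^+ i.+1 = q ^+ 'C(n.+1, 2).
  rewrite prodrXr -bin2_sum big_mkord big_ord_recl.
  by under [in RHS]eq_bigr do rewrite lift0.
have revB : \prod_(i < n) (1 + q ^+ i) = \prod_(i < n) (1 + q ^+ (n - i.+1)).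
  by rewrite (reindex_inj rev_ord_inj).
(* Rothe's identity for z = q and w = q^n, split into its two halves of n factors. *)
transitivity (\prod_(i < n.*2) (q ^+ n + q * q ^+ i)).
  rewrite -addnn big_split_ord /= exprD [X in _ * X]mulrC mulrACA; congr (_ * _).
    rewrite revB -triX -big_split; apply: eq_bigr => i _ /=.
    by rewrite mulrDr mulr1 -exprD subnKC // -exprS addrC.
  have -> : q ^+ (n * n) = \prod_(i < n) q ^+ n by rewrite prodr_const card_ord exprM.
  rewrite -big_split; apply: eq_bigr => i _ /=.
  by rewrite -exprS -addnS exprD; ring.
rewrite qbinom_theorem mulr_sumr; apply: eq_bigr => j _.
rewrite -exprM mulrA -exprD -tri_exponent; last by rewrite -ltnS.
by rewrite !exprD -[LHS]mulrA mulrAC mulrA.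
Qed.

Lemma eta_trunc_stable k N a b : (0 < k)%N -> (N <= a)%N -> (N <= b)%N ->
  eq_upto N (eta_trunc k a) (eta_trunc k b).
Proof.
move=> k_gt0 Na Nb.
apply: (eq_upto_prod_stable (F := fun i => 1 - 'X^(k * i.+1))) => // i Ni.
by rewrite -mulrN1; apply: eq_upto_1DXn; nia.
Qed.

Lemma eta_etainv_trunc k N M : (0 < k)%N -> (N <= M)%N ->
  eq_upto N (eta_trunc k M * etainv_trunc k M) 1.
Proof.
move=> k_gt0 NM; rewrite -big_split /=; apply: eq_upto_prod1 => i _.
under eq_bigr do rewrite exprM.
rewrite -opprB mulNr -subrX1 opprB -exprM -mulrN1; apply: eq_upto_1DXn; nia.
Qed.

Lemma etainv_trunc_stable k N a b : (0 < k)%N -> (N <= a)%N -> (N <= b)%N ->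
  eq_upto N (etainv_trunc k a) (etainv_trunc k b).
Proof.
move=> k_gt0 Na Nb; apply: (eq_upto_inv (p := eta_trunc k a) (q := eta_trunc k b)).
- exact: eta_etainv_trunc.
- exact: eta_etainv_trunc.
- exact: eta_trunc_stable.
Qed.

Lemma eta_trunc_comp k m M : eta_trunc k M \Po 'X^m = eta_trunc (k * m) M.
Proof.
rewrite /eta_trunc rmorph_prod; apply: eq_bigr => i _.
by rewrite rmorphB rmorph1 /= comp_Xn_poly -exprM mulnA (mulnC m).
Qed.

Lemma etainv_trunc_comp k m M : etainv_trunc k M \Po 'X^m = etainv_trunc (k * m) M.
Proof.
rewrite /etainv_trunc rmorph_prod; apply: eq_bigr => i _.
rewrite rmorph_sum; apply: eq_bigr => j _.
by rewrite /= comp_Xn_poly -exprM; congr 'X^_; lia.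
Qed.

Lemma qpoch_Xn k M : qpoch 'X^k M = eta_trunc k M.
Proof. by apply: eq_bigr => i _; rewrite -exprM. Qed.

(* A truncation of sum_(m in Z) q^(k m(m+1)/2) = 2 psi(q^k). *)
Definition psi_trunc k n : {poly int} := \sum_(j < n.*2.+1) 'X^(k * tri n j).

Lemma eta_qbinom_trunc k N M a b : (0 < k)%N -> (N <= M)%N -> (N <= a)%N -> (N <= b)%N ->
  eq_upto N (eta_trunc k M * qbinom 'X^k (a + b) a) 1.
Proof.
move=> k_gt0 NM Na Nb; have EI := eta_etainv_trunc k_gt0 NM.
apply: eq_upto_trans (eq_upto_sym (eq_upto_mulr1 _ EI)) _.
rewrite mulrACA mulrA; apply: eq_upto_trans EI; apply: eq_uptoMr.
apply: (eq_upto_trans (q := eta_trunc k a * eta_trunc k b * qbinom 'X^k (a + b) a)).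
  by apply/eq_uptoMr/eq_uptoM; apply: eta_trunc_stable.
by rewrite -!qpoch_Xn qpoch_qbinom !qpoch_Xn; apply: eta_trunc_stable => //; lia.
Qed.

Lemma tri_small_central N n j : (tri n j <= N)%N -> (N.*2 < n)%N -> (j <= n.*2)%N ->
  (N <= j)%N /\ (N <= n.*2 - j)%N.
Proof. by move=> small Nn jn; have := tri_oddz n j; rewrite /oddz expr2; nia. Qed.

Lemma prod_1DX_eta_trunc k N m M : (0 < k)%N -> (N <= m)%N -> (N <= M)%N ->
  eq_upto N (\prod_(i < m) (1 + 'X^k ^+ i.+1))
            (eta_trunc (k * 2) M * etainv_trunc k M).
Proof.
move=> k_gt0 Nm NM; have EI := eta_etainv_trunc k_gt0 NM.
apply: eq_upto_trans (eq_upto_sym (eq_upto_mulr1 _ EI)) _.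
rewrite mulrA [_ * eta_trunc k M]mulrC; apply: eq_uptoMr.
apply: (eq_upto_trans (q := eta_trunc k m * \prod_(i < m) (1 + 'X^k ^+ i.+1))).
  by apply: eq_uptoMr; apply: eta_trunc_stable.
by rewrite -!qpoch_Xn qpoch_sqr -exprM !qpoch_Xn; apply: eta_trunc_stable => //; lia.
Qed.

Lemma psi_trunc_eta k N M n : (0 < k)%N -> (N <= M)%N -> (N.*2 < n)%N ->
  eq_upto N (psi_trunc k n) (2%:R * eta_trunc (k * 2) M ^+ 2 * etainv_trunc k M).
Proof.
move=> k_gt0 NM Nn; have EI := eta_etainv_trunc k_gt0 NM.
have Xk_neq0 : 'X^k != 0 :> {poly int} by rewrite monic_neq0 ?monicXn.
apply: (eq_upto_trans (q := eta_trunc k M *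
  (\prod_(i < n) (1 + 'X^k ^+ i.+1) * \prod_(i < n) (1 + 'X^k ^+ i)))).
  apply: eq_upto_sym; rewrite finite_jacobi // mulr_sumr.
  apply: eq_upto_sum => j _; rewrite mulrCA -exprM.
  have jn : (j <= n.*2)%N by rewrite -ltnS.
  case: (leqP (tri n j) N) => [small | large].
    apply: eq_upto_mulr1; have [Nj Njn] := tri_small_central small Nn jn.
    by rewrite -{1}(subnKC jn); apply: eta_qbinom_trunc.
  by rewrite -[X in eq_upto _ _ X]mulr1; apply: eq_upto_XnM; nia.
case: n Nn => // n Nn; rewrite [X in _ * (_ * X)]big_ord_recl expr0.
apply: (eq_upto_trans _ (eq_upto_mulr1 _ EI)).
set E := eta_trunc k M; set I := etainv_trunc k M; set E2 := eta_trunc (k * 2) M.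
have -> : 2%:R * E2 ^+ 2 * I * (E * I) = E * ((E2 * I) * ((1 + 1) * (E2 * I))) by ring.
by apply/eq_uptoMl/eq_uptoM/eq_uptoMl; apply: prod_1DX_eta_trunc => //; lia.
Qed.

Definition odd_pair (z : int * int) := odd `|z.1|%N && odd `|z.2|%N.

(* (3u + 5v)^2 + 15 (u - v)^2 = 8 (3u^2 + 5v^2); the signs make both coordinates odd. *)
Definition to_rep115 (z : int * int) : int * int :=
  let: (u, v) := z in
  if (4 %| u + v)%Z then (((3 * u + 5 * v) %/ 2)%Z, ((u - v) %/ 2)%Z)
  else (((3 * u - 5 * v) %/ 2)%Z, ((- u - v) %/ 2)%Z).

Definition to_rep35 (z : int * int) : int * int :=
  let: (x, y) := z in
  if (8 %| x + y)%Z then (((x + 5 * y) %/ 4)%Z, ((x - 3 * y) %/ 4)%Z)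
  else (((x - 5 * y) %/ 4)%Z, ((- x - 3 * y) %/ 4)%Z).

Lemma to_rep115_spec s z : odd_pair z -> 3 * z.1 ^+ 2 + 5 * z.2 ^+ 2 = 8 * s ->
  [/\ odd_pair (to_rep115 z), (to_rep115 z).1 ^+ 2 + 15 * (to_rep115 z).2 ^+ 2 = 16 * s
    & to_rep35 (to_rep115 z) = z].
Proof.
case: z => u v /andP[/= ou ov]; rewrite !expr2 /to_rep115.
case: ifP => /= uv4; set x := (_ %/ 2)%Z; set y := (_ %/ 2)%Z;
  [have [ex ey] : 2 * x = 3 * u + 5 * v /\ 2 * y = u - v by rewrite /x /y; lia
  |have [ex ey] : 2 * x = 3 * u - 5 * v /\ 2 * y = - u - v by rewrite /x /y; lia];
  clearbody x y; move=> e; (split; [rewrite /odd_pair /=; clear e; lia | nia |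
    by rewrite /to_rep35; case: ifP => ?; congr pair; clear e; lia]).
Qed.

Lemma rep115_pm_mod8 x y s : odd `|x|%N -> odd `|y|%N -> x ^+ 2 + 15 * y ^+ 2 = 16 * s ->
  (8 %| x + y)%Z || (8 %| x - y)%Z.
Proof.
move=> ox oy; rewrite (divz_eq x 8) (divz_eq y 8) !expr2.
have : (x %% 8 \in [:: 1; 3; 5; 7])%Z by rewrite !inE; lia.
have : (y %% 8 \in [:: 1; 3; 5; 7])%Z by rewrite !inE; lia.
move: (x %/ 8)%Z (x %% 8)%Z (y %/ 8)%Z (y %% 8)%Z => p r p' r'.
by rewrite !inE => /or4P[] /eqP-> /or4P[] /eqP-> e; lia.
Qed.

Lemma to_rep35_spec s z : odd_pair z -> z.1 ^+ 2 + 15 * z.2 ^+ 2 = 16 * s ->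
  [/\ odd_pair (to_rep35 z), 3 * (to_rep35 z).1 ^+ 2 + 5 * (to_rep35 z).2 ^+ 2 = 8 * s
    & to_rep115 (to_rep35 z) = z].
Proof.
case: z => x y /andP[/= ox oy] e; have xy := rep115_pm_mod8 ox oy e; move: e.
rewrite !expr2 /to_rep35; case: ifP => /= xy8; set u := (_ %/ 4)%Z; set v := (_ %/ 4)%Z;
  [have [eu ev] : 4 * u = x + 5 * y /\ 4 * v = x - 3 * y by rewrite /u /v; lia
  |have [eu ev] : 4 * u = x - 5 * y /\ 4 * v = - x - 3 * y by rewrite /u /v; lia];
  clearbody u v; move=> e; (split; [rewrite /odd_pair /=; clear e; lia | nia |
    by rewrite /to_rep115; case: ifP => ?; congr pair; clear e; lia]).
Qed.

Lemma card_in_bij (T T' : finType) (A : {set T}) (B : {set T'})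
    (f : T -> T') (g : T' -> T) :
  {in A, forall x, f x \in B} -> {in B, forall y, g y \in A} ->
  {in A, cancel f g} -> {in B, cancel g f} -> #|A| = #|B|.
Proof.
move=> fA gB fK gK; have <- : f @: A = B.
  apply/setP => y; apply/imsetP/idP => [[x xA ->]|yB]; first exact: fA.
  by exists (g y); rewrite ?gB ?gK.
by rewrite card_in_imset //; apply: can_in_inj fK.
Qed.

Definition ord_of_oddz n (x : int) : 'I_n.*2.+1 :=
  inord (absz (((x - 1) %/ 2)%Z + n%:Z)).

Lemma oddzK n (j : 'I_n.*2.+1) : ord_of_oddz n (oddz n j) = j.
Proof. by apply: val_inj; rewrite /= inordK /oddz; have := ltn_ord j; lia. Qed.

Lemma ord_of_oddzK n x : odd `|x|%N -> (`|x| < n.*2)%N -> oddz n (ord_of_oddz n x) = x.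
Proof. by move=> ox xn; rewrite /oddz inordK; lia. Qed.

Definition oddz_pair n (p : 'I_n.*2.+1 * 'I_n.*2.+1) := (oddz n p.1, oddz n p.2).

Lemma card_oddz_pair_bij n (P Q : pred (int * int)) (f g : int * int -> int * int) :
  (forall z, odd_pair z -> P z || Q z -> (`|z.1| < n.*2)%N && (`|z.2| < n.*2)%N) ->
  (forall z, odd_pair z -> P z -> [/\ odd_pair (f z), Q (f z) & g (f z) = z]) ->
  (forall z, odd_pair z -> Q z -> [/\ odd_pair (g z), P (g z) & f (g z) = z]) ->
  #|[set p : 'I_n.*2.+1 * 'I_n.*2.+1 | P (oddz_pair p)]| =
  #|[set p : 'I_n.*2.+1 * 'I_n.*2.+1 | Q (oddz_pair p)]|.
Proof.
move=> bounded fPQ gQP.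
pose lift z := (ord_of_oddz n z.1, ord_of_oddz n z.2).
have oddz_pairK z : odd_pair z -> (`|z.1| < n.*2)%N && (`|z.2| < n.*2)%N ->
    oddz_pair (lift z) = z.
  by case: z => x y /andP[ox oy] /andP[xn yn]; rewrite /oddz_pair /= !ord_of_oddzK.
have liftK p : lift (oddz_pair p) = p by case: p => i j; rewrite /lift /= !oddzK.
have odd_oddz (p : 'I_n.*2.+1 * 'I_n.*2.+1) : odd_pair (oddz_pair p).
  by rewrite /odd_pair /oddz_pair /oddz /=; lia.
apply: (card_in_bij (f := fun p => lift (f (oddz_pair p)))
                    (g := fun p => lift (g (oddz_pair p)))).
- move=> p; rewrite !inE /= => Pp; have [oddf Qf _] := fPQ _ (odd_oddz p) Pp.
  by rewrite oddz_pairK ?bounded ?Qf ?orbT.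
- move=> p; rewrite !inE /= => Qp; have [oddg Pg _] := gQP _ (odd_oddz p) Qp.
  by rewrite oddz_pairK ?bounded ?Pg.
- move=> p; rewrite inE /= => Pp; have [oddf Qf fK] := fPQ _ (odd_oddz p) Pp.
  by rewrite oddz_pairK ?bounded ?Qf ?orbT // fK liftK.
- move=> p; rewrite inE /= => Qp; have [oddg Pg gK] := gQP _ (odd_oddz p) Qp.
  by rewrite oddz_pairK ?bounded ?Pg // gK liftK.
Qed.

Lemma coef_psi_truncM a b n i : (psi_trunc a n * psi_trunc b n)`_i =
  #|[set p : 'I_n.*2.+1 * 'I_n.*2.+1 | a * tri n p.1 + b * tri n p.2 == i]%N|%:R.
Proof.
rewrite /psi_trunc mulr_suml coef_sum.
under eq_bigr => j _ do rewrite mulr_sumr coef_sum.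
rewrite pair_big -sum1_card natr_sum [RHS]big_mkcond /=; apply: eq_bigr => p _.
by rewrite -exprD coefXn inE eq_sym; case: (_ == _).
Qed.

Lemma card_rep115_rep35 n s : (0 < s)%N -> (4 * s < n.*2)%N ->
  #|[set p : 'I_n.*2.+1 * 'I_n.*2.+1 |
      (oddz_pair p).1 ^+ 2 + 15 * (oddz_pair p).2 ^+ 2 == 16 * s%:Z]| =
  #|[set p : 'I_n.*2.+1 * 'I_n.*2.+1 |
      3 * (oddz_pair p).1 ^+ 2 + 5 * (oddz_pair p).2 ^+ 2 == 8 * s%:Z]|.
Proof.
move=> s_gt0 sn.
apply: (card_oddz_pair_bij (P := fun z => z.1 ^+ 2 + 15 * z.2 ^+ 2 == 16 * s%:Z)
                            (Q := fun z => 3 * z.1 ^+ 2 + 5 * z.2 ^+ 2 == 8 * s%:Z)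
                            (f := to_rep35) (g := to_rep115)).
- by move=> [x y] _ /orP[] /eqP /=; rewrite !expr2 => e; apply/andP; split; nia.
- by move=> z oz /eqP e; have [? /eqP ? ?] := to_rep35_spec oz e.
- by move=> z oz /eqP e; have [? /eqP ? ?] := to_rep115_spec oz e.
Qed.

Section EvenPart.
Variable R : comNzRingType.
Implicit Types p q : {poly R}.

Lemma even_poly_compX2 p : even_poly (p \Po 'X^2) = p.
Proof.
by apply/polyP => i; rewrite coef_even_poly coef_comp_poly_Xn // -muln2 dvdn_mull // mulnK.
Qed.

Lemma odd_poly_compX2 p : odd_poly (p \Po 'X^2) = 0.
Proof.
by apply/polyP => i; rewrite coef_odd_poly coef_comp_poly_Xn // dvdn2 /= odd_double coef0.
Qed.

Lemma even_poly_compX2M p q : even_poly ((p \Po 'X^2) * q) = p * even_poly q.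
Proof.
rewrite -{1}(poly_even_odd q) mulrDr mulrA -!comp_polyM even_polyD even_polyMX.
by rewrite !even_poly_compX2 odd_poly_compX2 mul0r addr0.
Qed.

End EvenPart.

Lemma even_psi_1_15 n t : (4 * t + 4 < n.*2)%N ->
  eq_upto t (even_poly (psi_trunc 1 n * psi_trunc 15 n)) (psi_trunc 3 n * psi_trunc 5 n).
Proof.
move=> tn i it; rewrite coef_even_poly !coef_psi_truncM; congr _%:R.
rewrite (eq_card (B := [set p : 'I_n.*2.+1 * 'I_n.*2.+1 |
    (oddz_pair p).1 ^+ 2 + 15 * (oddz_pair p).2 ^+ 2 == 16 * i.+1%:Z])); last first.
  move=> p; rewrite !inE /= -!tri_oddz; apply/eqP/eqP; lia.
rewrite card_rep115_rep35 //; last by lia.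
by apply: eq_card => p; rewrite !inE /= -!tri_oddz; apply/eqP/eqP; lia.
Qed.

Definition gf_trunc M : {poly int} :=
  eta_trunc 6 M * eta_trunc 10 M * etainv_trunc 1 M * etainv_trunc 15 M.

Definition G_trunc M : {poly int} :=
  eta_trunc 3 M * eta_trunc 5 M * etainv_trunc 1 M ^+ 2 * etainv_trunc 15 M ^+ 2.

Section Dissection.
Variable N : nat.
Local Notation E k := (eta_trunc k N).
Local Notation I k := (etainv_trunc k N).

Lemma G_trunc_compX2 : G_trunc N \Po 'X^2 = E 6 * E 10 * I 2 ^+ 2 * I 30 ^+ 2.
Proof. by rewrite /G_trunc !comp_polyM !eta_trunc_comp !etainv_trunc_comp. Qed.

Lemma psi_1_15_trunc n : (N.*2 < n)%N ->
  eq_upto N ((G_trunc N \Po 'X^2) * (psi_trunc 1 n * psi_trunc 15 n)) (gf_trunc N *+ 4).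
Proof.
move=> Nn; apply: eq_upto_trans (eq_uptoMl _ (eq_uptoM
  (psi_trunc_eta _ (leqnn N) Nn) (psi_trunc_eta _ (leqnn N) Nn))) _ => //.
rewrite G_trunc_compX2 mul1n -[(15 * 2)%N]/30%N.
have -> : E 6 * E 10 * I 2 ^+ 2 * I 30 ^+ 2 *
    (2%:R * E 2 ^+ 2 * I 1 * (2%:R * E 30 ^+ 2 * I 15)) =
    gf_trunc N *+ 4 * ((E 2 * I 2) * (E 2 * I 2) * ((E 30 * I 30) * (E 30 * I 30))).
  by rewrite /gf_trunc; ring.
by apply/eq_upto_mulr1/eq_upto_mul1; apply: eq_upto_mul1; apply: eta_etainv_trunc.
Qed.

Lemma psi_3_5_trunc n : (N.*2 < n)%N ->
  eq_upto N (G_trunc N * (psi_trunc 3 n * psi_trunc 5 n)) (gf_trunc N ^+ 2 *+ 4).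
Proof.
move=> Nn; apply: eq_upto_trans (eq_uptoMl _ (eq_uptoM
  (psi_trunc_eta _ (leqnn N) Nn) (psi_trunc_eta _ (leqnn N) Nn))) _ => //.
rewrite -[(3 * 2)%N]/6%N -[(5 * 2)%N]/10%N.
have -> : G_trunc N * (2%:R * E 6 ^+ 2 * I 3 * (2%:R * E 10 ^+ 2 * I 5)) =
    gf_trunc N ^+ 2 *+ 4 * ((E 3 * I 3) * (E 5 * I 5)).
  by rewrite /G_trunc /gf_trunc; ring.
by apply/eq_upto_mulr1/eq_upto_mul1; apply: eta_etainv_trunc.
Qed.

Lemma gf_trunc_dissection t : (t.*2 <= N)%N -> (gf_trunc N)`_t.*2 = (gf_trunc N ^+ 2)`_t.
Proof.
move=> tN; have Nn : (N.*2 < N.*2.+3)%N by lia.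
have tn : (4 * t + 4 < (N.*2.+3).*2)%N by lia.
have := psi_1_15_trunc Nn tN.
rewrite -coef_even_poly even_poly_compX2M (eq_uptoMl _ (even_psi_1_15 tn) (leqnn t)).
rewrite (psi_3_5_trunc Nn (_ : t <= N)%N) ?coefMn; last by lia.
by move/eqP; rewrite eqrMn2r => /eqP.
Qed.

End Dissection.

Lemma coef_gf_trunc i M : (i <= M)%N -> (gf_trunc M)`_i = P_6_10_1_15 i.
Proof.
move=> iM; have stable : eq_upto i (gf_trunc M) (gf_trunc i).
  by do ![apply: eq_uptoM | apply: eta_trunc_stable | apply: etainv_trunc_stable].
exact: stable (leqnn i).
Qed.

Lemma ps_mulr1 (a : ps) n : ps_mul a ps_one n = a n.
Proof.
rewrite /ps_mul big_ord_recr /= subnn mulr1 big1 ?add0r // => i _.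
by rewrite /ps_one subn_eq0 leqNgt ltn_ord mulr0.
Qed.

Theorem theorem3p5 : convolutive 2 P_6_10_1_15.
Proof.
move=> t; rewrite mul2n -[LHS]/((gf_trunc t.*2)`_t.*2) gf_trunc_dissection //.
rewrite expr2 coefM; apply: eq_bigr => i _.
by rewrite ps_mulr1 !coef_gf_trunc //; have := ltn_ord i; lia.
Qed.
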